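(* Let $M$ be an $n\times n$ complex matrix, $k\in\{3,\dots,n-1\}$ and $p$ a positive integer with $p\leq k$. If $M$ is $k$-spectrally monomorphic, then for every subset $\beta\subseteq[n]$ with $|\beta|\leq n-k$, the number \[ \sum_{\alpha\supseteq\beta,\ |\alpha|=p}\det(M[\alpha]) \] (sum over subsets $\alpha\subseteq[n]$ of size $p$ containing $\beta$) depends only on the cardinality of $\beta$.
   Context: $[n]=\{1,\dots,n\}$. For $\alpha\subseteq[n]$, $M[\alpha]$ is the principal submatrix of $M$ with rows and columns indexed by $\alpha$. A square matrix is $k$-spectrally monomorphic if all its $k\times k$ principal submatrices have the same characteristic polynomial $\det(zI-M[\alpha])$. *)

From HB Require Import structures.
From mathcomp Require Import all_boot all_order all_algebra.
From mathcomp Require Import reals.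
From mathcomp Require Export complex.
Set Implicit Arguments. Unset Strict Implicit. Unset Printing Implicit Defensive.
Import Order.TTheory GRing.Theory Num.Theory.
Local Open Scope ring_scope.

(* Principal submatrix M[alpha]: rows and columns indexed by alpha, listed in
   increasing order (enum of 'I_n is increasing). *)
Definition psubmx (F : Type) (n : nat) (M : 'M[F]_n) (A : {set 'I_n}) : 'M[F]_#|A| :=
  \matrix_(i < #|A|, j < #|A|) M (enum_val i) (enum_val j).

Definition spec_mono (F : comNzRingType) (n k : nat) (M : 'M[F]_n) : Prop :=
  forall A B : {set 'I_n}, #|A| = k -> #|B| = k ->
    char_poly (psubmx M A) = char_poly (psubmx M B).

From HB Require Import structures.
From mathcomp Require Import all_boot all_order all_algebra.
From mathcomp Require Import reals complex.
From mathcomp Require Import perm zify.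
Set Implicit Arguments. Unset Strict Implicit. Unset Printing Implicit Defensive.
Import Order.TTheory GRing.Theory Num.Theory.
Local Open Scope ring_scope.

(* The coefficient of z^(|G|-p) in det(zI - M[G]) is (-1)^p times the sum E(G)
   of the p x p principal minors of M inside G, so k-spectral monomorphy makes
   E(G) the same number c * C(k,p) for every k-set G. Then g(A) = det M[A] - c
   sums to 0 over the p-subsets of any k-set; double counting (a p-subset of U
   misses exactly |U| - p points of U) spreads this to every U with |U| >= k,
   and removing the points of B one at a time to the p-sets A with B <= A <= U
   whenever |B| + k <= |U|. Hence the sum over the p-supersets of beta is c
   times their number, which depends only on |beta|. *)

(* Principal minors are realised as determinants of n x n matrices, which
   avoids casts between the sizes of different principal submatrices. *)
Definition maskmx (R : nzSemiRingType) n (A : 'M[R]_n) (S : {set 'I_n}) : 'M[R]_n :=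
  \matrix_(i, j) if (i \in S) && (j \in S) then A i j else (i == j)%:R.

Section MaskedDeterminants.

Variables (R : comNzRingType) (n : nat).

Lemma prod_diag_add_perm (d : 'I_n -> R) (B : 'M[R]_n) (s : 'S_n) (J : {set 'I_n}) :
  \prod_i (if i \in J then B i (s i) else (i == s i)%:R * d i)
  = (\prod_(i in ~: J) d i) * \prod_i maskmx B J i (s i).
Proof.
have [s_fix | /forallPn[i0]] := boolP [forall i, (i \notin J) ==> (s i == i)];
    last first.
  rewrite negb_imply => /andP[i0J si0].
  rewrite [LHS](bigD1 i0) // [X in _ = _ * X](bigD1 i0) //= mxE (negPf i0J) /=.
  by rewrite eq_sym (negPf si0) !mul0r mulr0.
have s_fixE i : i \notin J -> s i = i by move=> iJ; exact/eqP/(implyP (forallP s_fix i)).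
have sJ i : i \in J -> s i \in J.
  move=> iJ; apply: contraT => siJ; have /perm_inj si := s_fixE _ siJ.
  by rewrite si iJ in siJ.
rewrite (bigID [in J]) [X in _ * X](bigID [in J]) /=.
rewrite [X in _ * (_ * X)]big1 => [|i iJ]; last by rewrite mxE (negPf iJ) s_fixE ?eqxx.
rewrite mulr1 [RHS]mulrC; congr (_ * _).
  by apply: eq_bigr => i iJ; rewrite iJ mxE iJ sJ.
rewrite [RHS](eq_bigl (fun i => i \notin J)) => [|i]; last by rewrite inE.
by apply: eq_bigr => i iJ; rewrite (negPf iJ) s_fixE // eqxx mul1r.
Qed.

Lemma det_diag_add (d : 'I_n -> R) (B : 'M[R]_n) :
  \det (diag_mx (\row_i d i) + B)
  = \sum_(J : {set 'I_n}) (\prod_(i in ~: J) d i) * \det (maskmx B J).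
Proof.
under [RHS]eq_bigr do rewrite mulr_sumr.
rewrite exchange_big /=; apply: eq_bigr => s _.
under [RHS]eq_bigr do rewrite mulrCA.
rewrite -mulr_sumr; congr (_ * _).
under eq_bigr do rewrite !mxE addrC.
rewrite bigA_distr; apply: eq_bigr => J _.
by rewrite -prod_diag_add_perm; apply: eq_bigr => i _; rewrite mulr_natl.
Qed.

Lemma det_maskmx_restrict (A : 'M[R]_n) (G J : {set 'I_n}) :
  \det (maskmx (\matrix_(i, j) if (i \in G) && (j \in G) then A i j else 0) J)
  = if J \subset G then \det (maskmx A J) else 0.
Proof.
have [JG | /subsetPn[i iJ iG]] := boolP (J \subset G).
  congr (\det _); apply/matrixP => i j; rewrite !mxE.
  by case: (boolP (i \in J)) => iJ; case: (boolP (j \in J)) => jJ;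
    rewrite ?(subsetP JG i iJ) ?(subsetP JG j jJ).
rewrite (expand_det_row _ i) big1 // => j _.
rewrite !mxE iJ (negPf iG) /=; case: ifP => jJ; first by rewrite mul0r.
by case: eqP jJ => [<-|_]; rewrite ?iJ ?mul0r.
Qed.

Lemma det_maskmx_scalar_add (a : R) (A : 'M[R]_n) (G : {set 'I_n}) :
  \det (maskmx (a%:M + A) G)
  = \sum_(J : {set 'I_n} | J \subset G) a ^+ (#|G| - #|J|) * \det (maskmx A J).
Proof.
have -> : maskmx (a%:M + A) G = diag_mx (\row_i if i \in G then a else 1)
    + \matrix_(i, j) if (i \in G) && (j \in G) then A i j else 0.
  apply/matrixP => i j; rewrite !mxE; case: (i =P j) => [<- | /eqP ne].
    by rewrite andbb; case: (i \in G); rewrite ?addr0.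
  by case: ifP; rewrite ?add0r ?addr0 // mulr0n add0r.
rewrite det_diag_add [LHS](bigID (fun J : {set _} => J \subset G)) /=.
rewrite [X in _ + X]big1 ?addr0 => [|J /negPf nJG]; last first.
  by rewrite det_maskmx_restrict nJG mulr0.
apply: eq_bigr => J JG; rewrite det_maskmx_restrict JG; congr (_ * _).
have -> : (#|G| - #|J| = #|G :\: J|)%N by rewrite cardsD (setIidPr JG).
rewrite -prodr_const big_mkcond [RHS]big_mkcond; apply: eq_bigr => i _.
by rewrite !inE; case: (i \in J); case: (i \in G).
Qed.

Lemma det_mxsub_inj m (h : 'I_m -> 'I_n) (X : 'M[R]_n) : m = n -> injective h ->
  \det (mxsub h h X) = \det X.
Proof.
move=> e_mn; case: n / e_mn h X => h X h_inj; set s := perm h_inj.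
have -> : mxsub h h X = row_perm s (col_perm s X).
  by apply/matrixP => i j; rewrite !mxE !permE.
rewrite row_permE col_permE !det_mulmx !det_perm odd_permV.
by rewrite mulrC -mulrA -signr_addb addbb mulr1.
Qed.

Lemma det_psubmx (A : 'M[R]_n) (S : {set 'I_n}) :
  \det (psubmx A S) = \det (maskmx A S).
Proof.
pose h (i : 'I_(#|S| + #|~: S|)) : 'I_n :=
  match split i with inl a => enum_val a | inr b => enum_val b end.
have h_inj : injective h.
  move=> i j; rewrite /h -{2}(splitK i) -{2}(splitK j).
  case: (split i) => a; case: (split j) => b; try by move/enum_val_inj => ->.
    by move=> E; have := enum_valP b; rewrite -E inE enum_valP.
  by move=> E; have := enum_valP a; rewrite E inE enum_valP.
rewrite -(det_mxsub_inj _ _ h_inj); last by rewrite cardsC card_ord.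
have -> : mxsub h h (maskmx A S) = block_mx (psubmx A S) 0 0 1%:M.
  have hl a : h (lshift #|~: S| a) = enum_val a by rewrite /h (unsplitK (inl _ a)).
  have hr b : h (rshift #|S| b) = enum_val b by rewrite /h (unsplitK (inr _ b)).
  have notS (b : 'I_#|~: S|) : (enum_val b \in S) = false.
    by have := enum_valP b; rewrite inE => /negPf.
  apply/matrixP => i j; rewrite -(splitK i) -(splitK j).
  case: (split i) => i'; case: (split j) => j'; rewrite mxE /= ?hl ?hr
    ?block_mxEul ?block_mxEur ?block_mxEdl ?block_mxEdr !mxE ?enum_valP ?notS //=.
  - by case: eqP => // E; have := notS j'; rewrite -E enum_valP.
  - by case: eqP => // E; have := notS i'; rewrite E enum_valP.
  - by rewrite (inj_eq enum_val_inj).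
by rewrite det_ublock det1 mulr1.
Qed.

End MaskedDeterminants.

Lemma map_maskmx (R S : nzRingType) (f : {rmorphism R -> S}) n (A : 'M[R]_n) J :
  map_mx f (maskmx A J) = maskmx (map_mx f A) J.
Proof. by apply/matrixP => i j; rewrite !mxE; case: ifP; rewrite ?rmorph_nat. Qed.

Lemma char_poly_psubmx (R : comNzRingType) n (M : 'M[R]_n) (G : {set 'I_n}) :
  char_poly (psubmx M G)
  = \sum_(J : {set 'I_n} | J \subset G) 'X^(#|G| - #|J|) * (\det (maskmx (- M) J))%:P.
Proof.
have -> : char_poly (psubmx M G) = \det (psubmx (char_poly_mx M) G).
  by congr (\det _); apply/matrixP => i j; rewrite !mxE (inj_eq enum_val_inj).
rewrite det_psubmx /char_poly_mx -map_mxN det_maskmx_scalar_add.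
by apply: eq_bigr => J _; rewrite -map_maskmx det_map_mx.
Qed.

Lemma coef_char_poly_psubmx (R : comNzRingType) n (M : 'M[R]_n) (G : {set 'I_n}) p :
  (p <= #|G|)%N ->
  (char_poly (psubmx M G))`_(#|G| - p)
  = (-1) ^+ p * \sum_(J : {set 'I_n} | (J \subset G) && (#|J| == p)) \det (psubmx M J).
Proof.
move=> le_pG; rewrite char_poly_psubmx coef_sum mulr_sumr big_mkcondr /=.
apply: eq_bigr => J JG; rewrite coefXnM coefC -det_psubmx.
have le_JG := subset_leq_card JG.
have [<- | ne_Jp] := eqVneq #|J| p.
  rewrite ltnn subnn eqxx -detZ; congr (\det _).
  by apply/matrixP => i j; rewrite !mxE mulN1r.
case: ltnP => // le_JGp; rewrite subn_eq0 ifN // -ltnNge ltn_neqAle le_JGp andbT.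
by rewrite eqn_sub2lE.
Qed.

Section SubsetSums.

Variable T : finType.

Lemma card_supsets (B : {set T}) p : (p <= #|T|)%N ->
  #|[set A : {set T} | (B \subset A) && (#|A| == p)]| = 'C(#|T| - #|B|, #|T| - p).
Proof.
move=> pT; have <- : #|~: B| = (#|T| - #|B|)%N by rewrite -(cardsC B) addKn.
rewrite -(card_imset _ (@setC_inj T)) -cards_draws.
congr #|pred_of_set _|; apply/setP => C; rewrite inE.
apply/imsetP/andP => [[A] | [CB /eqP C_card]].
  rewrite inE => /andP[BA /eqP A_card] ->; rewrite setCS; split=> //.
  by apply/eqP; have := cardsC A; lia.
exists (~: C); last by rewrite setCK.
rewrite inE -setCS setCK CB /=; apply/eqP; have := cardsC C; lia.
Qed.

Lemma sum_subsets_setD1 (V : nmodType) (g : {set T} -> V) p (U : {set T}) :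
  \sum_(x in U) \sum_(A : {set T} | (A \subset U :\ x) && (#|A| == p)) g A
  = (\sum_(A : {set T} | (A \subset U) && (#|A| == p)) g A) *+ (#|U| - p).
Proof.
transitivity (\sum_(x in U) \sum_(A : {set T} | (A \subset U) && (#|A| == p))
                 (if x \notin A then g A else 0)).
  apply: eq_bigr => x _; rewrite big_mkcond [RHS]big_mkcond /=.
  apply: eq_bigr => A _; rewrite subsetD1 -andbA andbCA.
  by case: (x \notin A); rewrite ?if_same.
rewrite exchange_big -sumrMnl; apply: eq_bigr => A /andP[AU /eqP A_card].
rewrite -big_mkcondr sumr_const.
have -> : (#|U| - p = #|U :\: A|)%N by rewrite cardsD (setIidPr AU) A_card.
by congr (_ *+ _); apply: eq_card => x; rewrite !inE andbC.
Qed.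

Lemma sum_between_setD1 (V : nmodType) (g : {set T} -> V) p (B U : {set T}) x :
  x \in B ->
  \sum_(A : {set T} | [&& B :\ x \subset A, A \subset U & #|A| == p]) g A =
  \sum_(A : {set T} | [&& B \subset A, A \subset U & #|A| == p]) g A
  + \sum_(A : {set T} | [&& B :\ x \subset A, A \subset U :\ x & #|A| == p]) g A.
Proof.
move=> xB; rewrite [LHS](bigID (fun A : {set T} => x \in A)) /=.
congr (_ + _); apply: eq_bigl => A.
  rewrite -{2}(setD1K xB) subUset sub1set.
  by case: (x \in A); rewrite ?andbF ?andbT.
by rewrite subsetD1; case: (x \in A); rewrite ?andbF ?andbT.
Qed.

Section NullOnKSets.

Variables (F : numDomainType) (g : {set T} -> F) (k p : nat).
Hypothesis le_pk : (p <= k)%N.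
Hypothesis sum_ksubsets_eq0 : forall G : {set T}, #|G| = k ->
  \sum_(A : {set T} | (A \subset G) && (#|A| == p)) g A = 0.

Lemma sum_subsets_eq0 (U : {set T}) : (k <= #|U|)%N ->
  \sum_(A : {set T} | (A \subset U) && (#|A| == p)) g A = 0.
Proof.
have [m] := ubnP #|U|; elim: m U => // m IH U lt_Um le_kU.
have [lt_kU | le_Uk] := ltnP k #|U|; last first.
  by apply: sum_ksubsets_eq0; apply/eqP; rewrite eqn_leq le_kU le_Uk.
have card_UD1 x : x \in U -> #|U :\ x| = #|U|.-1.
  by move=> xU; rewrite (cardsD1 x U) xU.
have /eqP := sum_subsets_setD1 g p U.
rewrite big1 => [|x xU]; last by apply: IH; rewrite card_UD1 //; lia.
by rewrite eq_sym mulrn_eq0 subn_eq0 leqNgt (leq_ltn_trans le_pk lt_kU) => /eqP.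
Qed.

Lemma sum_between_eq0 (B U : {set T}) : B \subset U -> (#|B| + k <= #|U|)%N ->
  \sum_(A : {set T} | [&& B \subset A, A \subset U & #|A| == p]) g A = 0.
Proof.
have [b] := ubnP #|B|; elim: b B U => // b IH B U lt_Bb BU le_BkU.
have [->|[x xB]] := set_0Vmem B.
  by under eq_bigl do rewrite sub0set; apply: sum_subsets_eq0; lia.
have xU : x \in U := subsetP BU x xB.
have card_BD1 : #|B :\ x| = #|B|.-1 by rewrite (cardsD1 x B) xB.
have card_UD1 : #|U :\ x| = #|U|.-1 by rewrite (cardsD1 x U) xU.
have B_gt0 : (0 < #|B|)%N by apply/card_gt0P; exists x.
have := sum_between_setD1 g p U xB.
rewrite (IH (B :\ x) U) ?(IH (B :\ x) (U :\ x)) ?card_BD1 ?card_UD1 ?setSD;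
  try lia; last exact: subset_trans (subD1set B x) BU.
by rewrite addr0 => <-.
Qed.

Lemma sum_supsets_eq0 (B : {set T}) : (#|B| + k <= #|T|)%N ->
  \sum_(A : {set T} | (B \subset A) && (#|A| == p)) g A = 0.
Proof.
rewrite -cardsT => le_BkT; rewrite -[RHS](sum_between_eq0 (subsetT B) le_BkT).
by apply: eq_bigl => A; rewrite subsetT.
Qed.

End NullOnKSets.

Lemma sum_supsets_uniform (F : numDomainType) (f : {set T} -> F) k p c :
  (p <= k)%N ->
  (forall G : {set T}, #|G| = k ->
     \sum_(A : {set T} | (A \subset G) && (#|A| == p)) f A = c *+ 'C(k, p)) ->
  forall B : {set T}, (#|B| + k <= #|T|)%N ->
  \sum_(A : {set T} | (B \subset A) && (#|A| == p)) f A = c *+ 'C(#|T| - #|B|, #|T| - p).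
Proof.
move=> le_pk sum_f B le_BkT.
have sum_c (P : pred {set T}) : \sum_(A | P A) c = c *+ #|[set A | P A]|.
  by rewrite sumr_const cardsE.
have sum_ksubsets_eq0 (G : {set T}) : #|G| = k ->
    \sum_(A : {set T} | (A \subset G) && (#|A| == p)) (f A - c) = 0.
  by move=> G_card; rewrite sumrB sum_f // sum_c cards_draws G_card subrr.
have /eqP := sum_supsets_eq0 le_pk sum_ksubsets_eq0 le_BkT.
by rewrite sumrB sum_c card_supsets ?subr_eq0 => [/eqP|]; last lia.
Qed.

End SubsetSums.

Lemma sum_minors_spec_mono (R : comNzRingType) n k p (M : 'M[R]_n) :
  spec_mono k M -> (p <= k)%N -> forall G G' : {set 'I_n}, #|G| = k -> #|G'| = k ->
  \sum_(A : {set 'I_n} | (A \subset G) && (#|A| == p)) \det (psubmx M A)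
  = \sum_(A : {set 'I_n} | (A \subset G') && (#|A| == p)) \det (psubmx M A).
Proof.
move=> spec_k le_pk G G' G_card G'_card; apply: (can_inj (signrMK p)).
rewrite /= -!coef_char_poly_psubmx ?G_card ?G'_card // (spec_k G G') //.
by rewrite G_card -G'_card.
Qed.

Theorem proposition2p3 (R : realType) (n k p : nat) (M : 'M[complex R]_n) :
  (3 <= k)%N -> (k <= n - 1)%N -> (0 < p)%N -> (p <= k)%N ->
  spec_mono k M ->
  forall beta1 beta2 : {set 'I_n},
    (#|beta1| <= n - k)%N -> #|beta1| = #|beta2| ->
    \sum_(alpha : {set 'I_n} | (beta1 \subset alpha) && (#|alpha| == p))
        \det (psubmx M alpha)
    = \sum_(alpha : {set 'I_n} | (beta2 \subset alpha) && (#|alpha| == p))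
        \det (psubmx M alpha).
Proof.
move=> _ le_kn _ le_pk spec_k beta1 beta2 le_beta1 card_beta12.
have [G0 G0_card] : exists G0 : {set 'I_n}, #|G0| = k.
  have /card_gt0P[G0] : (0 < #|[set G : {set 'I_n} | #|G| == k]|)%N.
    by rewrite card_draws card_ord bin_gt0; lia.
  by rewrite inE => /eqP; exists G0.
pose c := (\sum_(A : {set 'I_n} | (A \subset G0) && (#|A| == p)) \det (psubmx M A))
  / 'C(k, p)%:R.
have sum_ksubsets (G : {set 'I_n}) : #|G| = k ->
    \sum_(A : {set 'I_n} | (A \subset G) && (#|A| == p)) \det (psubmx M A) = c *+ 'C(k, p).
  move=> G_card; rewrite -mulr_natr divfK ?pnatr_eq0 -?lt0n ?bin_gt0 //.
  exact: sum_minors_spec_mono spec_k le_pk _ _ G_card G0_card.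
rewrite !(sum_supsets_uniform le_pk sum_ksubsets) ?card_beta12 // card_ord -?card_beta12.
all: move: le_beta1 le_kn; clear; lia.
Qed.
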